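(* Let $n,m,p\in\mathbb{N}$ with $m\ge p$, $A\in\mathbb{R}^{n\times n}$, $B\in\mathbb{R}^{n\times m}$, $C\in\mathbb{R}^{p\times n}$, and let $f:\mathbb{R}\times\mathbb{R}^n\times\mathbb{R}^m\to\mathbb{R}^n$ be continuous and bounded. Assume: (P1) $L\in\mathcal{C}^\infty(\mathbb{R}\to\mathbb{R}^{m\times m})$ is such that $L,\dot L,\ldots,L^{(n)}$ are bounded and there is $q\in\mathbb{N}$ with $\operatorname{rk} BL(t)=q\ge p$ for all $t\in\mathbb{R}$; (P2) there is $r\in\mathbb{N}$ such that $CA^kBL(t)=0$ for all $t\in\mathbb{R}$ and $CA^kf(t,x,u)=0$ for all $(t,x,u)$, for $k=0,\ldots,r-2$, and $\Gamma:=CA^{r-1}B$ satisfies $\operatorname{rk}\Gamma L(t)=p$ for all $t\in\mathbb{R}$. Let $\mathcal{B}(t)$, $\mathcal{C}$ and $U(t)$ be as in the context. If there exists $\alpha>0$ such that $$\det\Big(\mathcal{C}\mathcal{B}(t)\big(\mathcal{C}\mathcal{B}(t)\big)^\top\Big)\ge\alpha\quad\text{for all }t\in\mathbb{R},$$ then $U$ is a Lyapunov transformation. The converse implication is false in general: there exist data $(A,B,C,f,L)$ satisfying (P1) and (P2) for which $U$ is a Lyapunov transformation but no such $\alpha>0$ exists.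
   Context: $M^\dagger$ denotes the Moore–Penrose pseudoinverse. For a matrix function $M$, $(\tfrac{d}{dt}-A)(M(t)):=\dot M(t)-AM(t)$, applied iteratively for powers. Define $\mathcal{B}(t):=\big[BL(t),(\tfrac{d}{dt}-A)(BL(t)),\ldots,(\tfrac{d}{dt}-A)^{r-1}(BL(t))\big]\in\mathbb{R}^{n\times rm}$; $\mathcal{C}:=[C^\top,(CA)^\top,\ldots,(CA^{r-1})^\top]^\top\in\mathbb{R}^{rp\times n}$; $\rho:=\operatorname{rk}\mathcal{C}$; $V\in\mathbb{R}^{n\times(n-\rho)}$ with $\operatorname{im}V=\ker\mathcal{C}$; $\mathcal{N}(t):=V^\dagger[I_n-\mathcal{B}(t)(\mathcal{C}\mathcal{B}(t))^\dagger\mathcal{C}]$; $U(t):=\begin{bmatrix}\mathcal{C}\\ \mathcal{N}(t)\end{bmatrix}$ (under (P1),(P2) this is a square invertible matrix). A map $M\in\mathcal{C}^1(\mathbb{R}\to\mathbf{Gl}_n(\mathbb{R}))$ is called a Lyapunov transformation if $M$, $M^{-1}$ and $\dot M$ are bounded on $\mathbb{R}$. *)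

From HB Require Import structures.
From mathcomp Require Import all_boot all_order all_algebra.
From mathcomp Require Import all_classical all_reals all_analysis.
Set Implicit Arguments. Unset Strict Implicit. Unset Printing Implicit Defensive.
Import Order.TTheory GRing.Theory Num.Theory.
Import numFieldNormedType.Exports.
Local Open Scope ring_scope.

Section Defs.
Variable R : realType.

Definition is_pinv (a b : nat) (M : 'M[R]_(a, b)) (X : 'M[R]_(b, a)) : Prop :=
  [/\ M *m X *m M = M, X *m M *m X = X,
      (M *m X)^T = M *m X & (X *m M)^T = X *m M].

Definition pinv (a b : nat) (M : 'M[R]_(a, b)) : 'M[R]_(b, a) :=
  match pselect (exists X, is_pinv M X) with
  | left e => proj1_sig (cid e)
  | right _ => 0
  end.

Definition mxfun_derive (a b : nat) (M : R -> 'M[R]_(a, b)) : R -> 'M[R]_(a, b) :=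
  fun t => \matrix_(i, j) derive1 (fun s => M s i j) t.

Definition mxfun_deriven (k a b : nat) (M : R -> 'M[R]_(a, b)) : R -> 'M[R]_(a, b) :=
  fun t => \matrix_(i, j) derive1n k (fun s => M s i j) t.

Definition mx_bounded (a b : nat) (M : R -> 'M[R]_(a, b)) : Prop :=
  exists K : R, forall t i j, `|M t i j| <= K.

Definition mx_smooth (a b : nat) (M : R -> 'M[R]_(a, b)) : Prop :=
  forall i j k t, derivable (derive1n k (fun s => M s i j)) t 1.

Definition mx_C1 (a b : nat) (M : R -> 'M[R]_(a, b)) : Prop :=
  forall i j, (forall t, derivable (fun s => M s i j) t 1) /\
              continuous (derive1 (fun s => M s i j)).

(* Lyapunov transformation: C^1, values in Gl_n, M, M^-1 and dM/dt bounded.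
   M t invertible is expressed by a two-sided inverse Minv t (forcing a = b). *)
Definition Lyapunov_transformation (a b : nat) (M : R -> 'M[R]_(a, b)) : Prop :=
  mx_C1 M /\
  exists Minv : R -> 'M[R]_(b, a),
    (forall t, M t *m Minv t = 1%:M /\ Minv t *m M t = 1%:M) /\
    mx_bounded M /\ mx_bounded Minv /\ mx_bounded (mxfun_derive M).

Definition diffA (n m : nat) (A : 'M[R]_n) (M : R -> 'M[R]_(n, m)) : R -> 'M[R]_(n, m) :=
  fun t => mxfun_derive M t - A *m M t.

Definition calB (n m r : nat) (A : 'M[R]_n) (B : 'M[R]_(n, m))
  (L : R -> 'M[R]_m) (t : R) : 'M[R]_(n, \sum_(k < r) m) :=
  \mxrow_(k < r) (iter k (diffA A) (fun s => B *m L s) t).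

Definition calC (n p r : nat) (A : 'M[R]_n) (C : 'M[R]_(p, n))
  : 'M[R]_(\sum_(k < r) p, n) :=
  \mxcol_(k < r) (C *m A ^+ k).

Definition im_eq_ker (n k q : nat) (V : 'M[R]_(n, k)) (K : 'M[R]_(q, n)) : Prop :=
  forall x : 'cV[R]_n, K *m x = 0 <-> exists y : 'cV[R]_k, x = V *m y.

Definition calN (n m p r : nat) (A : 'M[R]_n) (B : 'M[R]_(n, m)) (C : 'M[R]_(p, n))
  (L : R -> 'M[R]_m) (V : 'M[R]_(n, n - \rank (calC r A C))) (t : R)
  : 'M[R]_(n - \rank (calC r A C), n) :=
  pinv V *m (1%:M - calB r A B L t *m pinv (calC r A C *m calB r A B L t) *m calC r A C).

Definition calU (n m p r : nat) (A : 'M[R]_n) (B : 'M[R]_(n, m)) (C : 'M[R]_(p, n))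
  (L : R -> 'M[R]_m) (V : 'M[R]_(n, n - \rank (calC r A C))) (t : R)
  : 'M[R]_(\sum_(k < r) p + (n - \rank (calC r A C)), n) :=
  col_mx (calC r A C) (calN B L V t).

Definition f_cont_bdd (n m : nat) (f : R * 'cV[R]_n * 'cV[R]_m -> 'cV[R]_n) : Prop :=
  continuous f /\ exists K : R, forall x i j, `|f x i j| <= K.

Definition P1 (n m p : nat) (B : 'M[R]_(n, m)) (L : R -> 'M[R]_m) : Prop :=
  mx_smooth L /\
  (forall k, (k <= n)%N -> mx_bounded (mxfun_deriven k L)) /\
  exists q : nat, (p <= q)%N /\ forall t, \rank (B *m L t) = q.

Definition P2 (n m p r : nat) (A : 'M[R]_n) (B : 'M[R]_(n, m)) (C : 'M[R]_(p, n))
  (f : R * 'cV[R]_n * 'cV[R]_m -> 'cV[R]_n) (L : R -> 'M[R]_m) : Prop :=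
  (0 < r)%N /\
  (forall k, (k.+2 <= r)%N ->
     (forall t, C *m A ^+ k *m B *m L t = 0) /\
     (forall x, C *m A ^+ k *m f x = 0)) /\
  (forall t, \rank (C *m A ^+ r.-1 *m B *m L t) = p).

Definition det_cond (n m p r : nat) (A : 'M[R]_n) (B : 'M[R]_(n, m)) (C : 'M[R]_(p, n))
  (L : R -> 'M[R]_m) : Prop :=
  exists alpha : R, 0 < alpha /\
    forall t, alpha <= \det (calC r A C *m calB r A B L t *m (calC r A C *m calB r A B L t)^T).

End Defs.

(* Since det(CB(t) CB(t)^T) >= alpha > 0, the matrix CB(t) := calC calB(t) has full row
   rank, its pseudoinverse is CB^T (CB CB^T)^-1, and writing the inverse as adjugate over
   determinant shows that t |-> calB(t) CB(t)^+ is C^1, bounded and with bounded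
   derivative: the entries of calB involve only L and its first r <= n derivatives.
   Because im V = ker calC, U(t) is invertible with inverse [calB(t) CB(t)^+, V], so U,
   U^-1 and dU/dt are bounded.
   For the converse take n = m = p = r = 1, A = B = C = 1, f = 0 and L the logistic
   function sigma: then ker calC = 0, so U = calC = 1 is constant, while
   det(CB(t) CB(t)^T) = sigma(t)^2 tends to 0 as t -> -oo. *)

From Pilot Require Import Defs.
From HB Require Import structures.
From mathcomp Require Import all_boot all_order all_algebra.
From mathcomp Require Import all_classical all_reals all_analysis.
From mathcomp Require Import ring lra.
Import Order.TTheory GRing.Theory Num.Theory.
Import numFieldNormedType.Exports.
Local Open Scope ring_scope.

Set Implicit Arguments. Unset Strict Implicit. Unset Printing Implicit Defensive.

Section BoundedC1.
Variable R : realType.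
Implicit Types f g : R -> R.

Definition bounded_fn g := exists K, forall t, `|g t| <= K.

Definition C1b g :=
  [/\ forall t, derivable g t 1, continuous (derive1 g), bounded_fn g & bounded_fn (derive1 g)].

Lemma bounded_fnD f g : bounded_fn f -> bounded_fn g -> bounded_fn (fun t => f t + g t).
Proof.
move=> [a fa] [b gb]; exists (a + b) => t.
exact: le_trans (ler_normD _ _) (lerD (fa t) (gb t)).
Qed.

Lemma bounded_fnM f g : bounded_fn f -> bounded_fn g -> bounded_fn (fun t => f t * g t).
Proof.
move=> [a fa] [b gb]; exists (a * b) => t.
by rewrite normrM ler_pM.
Qed.

Lemma derivable1_continuous f t : derivable f t 1 -> {for t, continuous f}.
Proof. by move=> /derivable1_diffP /differentiable_continuous. Qed.

Lemma C1b_cst c : C1b (fun _ => c).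
Proof.
have d0 : derive1 (fun _ : R => c) = fun _ => 0 by apply/funext => t; rewrite derive1_cst.
rewrite /C1b d0; split.
- by move=> t; exact: derivable_cst.
- exact: cst_continuous.
- by exists `|c|.
- by exists 0 => t; rewrite normr0.
Qed.

Lemma C1bD f g : C1b f -> C1b g -> C1b (fun t => f t + g t).
Proof.
move=> [df cf bf bf'] [dg cg bg bg']; rewrite /C1b.
have -> : derive1 (fun t => f t + g t) = derive1 f + derive1 g.
  by apply/funext => t; rewrite !fctE !derive1E (deriveD (df t) (dg t)).
split; [by move=> t; exact: derivableD | | exact: bounded_fnD | exact: bounded_fnD].
by move=> t; apply: continuousD; [exact: cf | exact: cg].
Qed.

Lemma C1bM f g : C1b f -> C1b g -> C1b (fun t => f t * g t).
Proof.
move=> [df cf bf bf'] [dg cg bg bg']; rewrite /C1b.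
have -> : derive1 (fun t => f t * g t) = fun t => f t * derive1 g t + g t * derive1 f t.
  by apply/funext => t; rewrite !derive1E (deriveM (df t) (dg t)).
split; [by move=> t; exact: derivableM | | exact: bounded_fnM |].
- move=> t; apply: (@continuousD _ _ _ (f \* derive1 g) (g \* derive1 f));
  apply: continuousM; [exact: derivable1_continuous | exact: cg |
                       exact: derivable1_continuous | exact: cf].
- by apply: bounded_fnD; exact: bounded_fnM.
Qed.

Lemma C1bV f c : 0 < c -> (forall t, c <= f t) -> C1b f -> C1b (fun t => (f t)^-1).
Proof.
move=> c0 fc [df cf _ [K bf']]; rewrite /C1b.
have f_gt0 t : 0 < f t by exact: lt_le_trans c0 (fc t).
have f_neq0 t : f t != 0 by rewrite gt_eqF.
have -> : derive1 (fun t => (f t)^-1) = fun t => - ((f t)^-1 * (f t)^-1) * derive1 f t.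
  by apply/funext => t; rewrite !derive1E deriveV // -expr2 exprVn.
have invf_le t : `|(f t)^-1| <= c^-1.
  rewrite ger0_norm ?lef_pV2 ?posrE //; last by rewrite invr_ge0 ltW.
split.
- by move=> t; exact: derivableV.
- move=> t; have cVf : {for t, continuous (fun x => (f x)^-1)}.
    by apply: continuousV => //; exact: derivable1_continuous.
  apply: (@continuousM _ _ (- ((fun x => (f x)^-1) \* (fun x => (f x)^-1)))); last exact: cf.
  by apply: continuousN; apply: continuousM.
- by exists c^-1.
- exists (c^-1 * c^-1 * K) => t.
  by rewrite normrM normrN normrM !ler_pM ?mulr_ge0.
Qed.

Lemma C1b_sum (I : Type) (s : seq I) (F : I -> R -> R) :
  (forall i, C1b (F i)) -> C1b (fun t => \sum_(i <- s) F i t).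
Proof.
move=> FC; elim: s => [|i s IHs].
  by under eq_fun do rewrite big_nil; exact: C1b_cst.
by under eq_fun do rewrite big_cons; exact: C1bD.
Qed.

Lemma C1b_prod (I : Type) (s : seq I) (F : I -> R -> R) :
  (forall i, C1b (F i)) -> C1b (fun t => \prod_(i <- s) F i t).
Proof.
move=> FC; elim: s => [|i s IHs].
  by under eq_fun do rewrite big_nil; exact: C1b_cst.
by under eq_fun do rewrite big_cons; exact: C1bM.
Qed.

End BoundedC1.

Section SmoothBounded.
Variable R : realType.
Implicit Types f g : R -> R.

Definition smooth_bdd d g :=
  (forall k t, derivable (derive1n k g) t 1) /\
  (forall k, (k <= d)%N -> bounded_fn (derive1n k g)).

Lemma derive1nD f g k :
  (forall j t, derivable (derive1n j f) t 1) -> (forall j t, derivable (derive1n j g) t 1) ->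
  derive1n k (fun t => f t + g t) = fun t => derive1n k f t + derive1n k g t.
Proof.
move=> df dg; elim: k => [|k IHk]; first by rewrite !derive1n0.
by rewrite derive1nS IHk; apply/funext => t; rewrite !derive1nS !derive1E deriveD.
Qed.

Lemma derive1nZ f c k : (forall j t, derivable (derive1n j f) t 1) ->
  derive1n k (fun t => c * f t) = fun t => c * derive1n k f t.
Proof.
move=> df; elim: k => [|k IHk]; first by rewrite !derive1n0.
by rewrite derive1nS IHk; apply/funext => t; rewrite derive1Ml // derive1nS.
Qed.

Lemma derive1n_cst (c : R) k : derive1n k.+1 (fun _ => c) = fun _ => 0.
Proof.
elim: k => [|k IHk]; last by rewrite derive1nS IHk; apply/funext => t; rewrite derive1_cst.
by rewrite derive1n1; apply/funext => t; rewrite derive1_cst.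
Qed.

Lemma smooth_bdd_cst d c : smooth_bdd d (fun _ => c).
Proof.
split=> -[|k]; rewrite ?derive1n0 ?derive1n_cst.
- by move=> t; exact: derivable_cst.
- by move=> t; exact: derivable_cst.
- by exists `|c|.
- by exists 0 => t; rewrite normr0.
Qed.

Lemma smooth_bddD d f g : smooth_bdd d f -> smooth_bdd d g -> smooth_bdd d (fun t => f t + g t).
Proof.
move=> [df bf] [dg bg]; split=> k; rewrite derive1nD //.
- by move=> t; exact: derivableD.
- by move=> kd; apply: bounded_fnD; [exact: bf | exact: bg].
Qed.

Lemma smooth_bddZ d f c : smooth_bdd d f -> smooth_bdd d (fun t => c * f t).
Proof.
move=> [df bf]; split=> k; rewrite derive1nZ //.
- by move=> t; apply: derivableM => //; exact: derivable_cst.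
- by move=> kd; apply: bounded_fnM; [exists `|c| | exact: bf].
Qed.

Lemma smooth_bdd_sum d (I : Type) (s : seq I) (F : I -> R -> R) :
  (forall i, smooth_bdd d (F i)) -> smooth_bdd d (fun t => \sum_(i <- s) F i t).
Proof.
move=> FS; elim: s => [|i s IHs].
  by under eq_fun do rewrite big_nil; exact: smooth_bdd_cst.
by under eq_fun do rewrite big_cons; exact: smooth_bddD.
Qed.

Lemma smooth_bdd_derive d g : smooth_bdd d.+1 g -> smooth_bdd d (derive1 g).
Proof. by move=> [dg bg]; split=> k; rewrite -derive1Sn; [exact: dg | move=> kd; exact: bg]. Qed.

Lemma smooth_bdd_le d d' g : (d' <= d)%N -> smooth_bdd d g -> smooth_bdd d' g.
Proof. by move=> le_d [dg bg]; split=> // k kd; apply: bg; exact: leq_trans le_d. Qed.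

Lemma smooth_bdd_C1b g : smooth_bdd 1 g -> C1b g.
Proof.
move=> [dg bg]; split.
- by move=> t; have := dg 0%N t; rewrite derive1n0.
- by move=> t; apply: derivable1_continuous; have := dg 1%N t; rewrite derive1n1.
- by have := bg 0%N isT; rewrite derive1n0.
- by have := bg 1%N isT; rewrite derive1n1.
Qed.

End SmoothBounded.

Section MatrixFunctions.
Variable R : realType.

Definition mxC1b a b (M : R -> 'M[R]_(a, b)) := forall i j, C1b (fun t => M t i j).

Definition mx_smooth_bdd d a b (M : R -> 'M[R]_(a, b)) :=
  forall i j, smooth_bdd d (fun t => M t i j).

Lemma mx_bounded_entries a b (M : R -> 'M[R]_(a, b)) :
  (forall i j, bounded_fn (fun t => M t i j)) -> mx_bounded M.
Proof.
move=> bM; have {}bM ij : bounded_fn (fun t => M t ij.1 ij.2) by exact: bM.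
pose K ij := proj1_sig (cid (bM ij)).
have MK ij : forall t, `|M t ij.1 ij.2| <= K ij by exact: proj2_sig (cid (bM ij)).
exists (\sum_ij K ij) => t i j; apply: le_trans (MK (i, j) t) _.
rewrite (bigD1 (i, j)) //= lerDl sumr_ge0 // => ij _.
exact: le_trans (normr_ge0 _) (MK ij 0).
Qed.

Lemma Lyapunov_transformation_C1b a b (M : R -> 'M[R]_(a, b)) (Minv : R -> 'M[R]_(b, a)) :
  mxC1b M -> mxC1b Minv -> (forall t, M t *m Minv t = 1%:M /\ Minv t *m M t = 1%:M) ->
  Lyapunov_transformation M.
Proof.
move=> CM CMinv MMinv; split=> [i j|].
  by have [dM cM _ _] := CM i j; exact: conj dM cM.
exists Minv; split=> //; split; last split; apply: mx_bounded_entries => i j.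
- by have [_ _ bM _] := CM i j.
- by have [_ _ bMinv _] := CMinv i j.
- by under eq_fun do rewrite mxE; have [_ _ _ bM'] := CM i j.
Qed.

Lemma mxC1b_cst a b (M0 : 'M[R]_(a, b)) : mxC1b (fun _ => M0).
Proof. by move=> i j; exact: C1b_cst. Qed.

Lemma mxC1bD a b (M N : R -> 'M[R]_(a, b)) :
  mxC1b M -> mxC1b N -> mxC1b (fun t => M t + N t).
Proof. by move=> CM CN i j; under eq_fun do rewrite mxE; exact: C1bD. Qed.

Lemma mxC1bN a b (M : R -> 'M[R]_(a, b)) : mxC1b M -> mxC1b (fun t => - M t).
Proof.
move=> CM i j; under eq_fun do rewrite mxE -mulN1r.
by apply: C1bM => //; exact: C1b_cst.
Qed.

Lemma mxC1bM a b c (M : R -> 'M[R]_(a, b)) (N : R -> 'M[R]_(b, c)) :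
  mxC1b M -> mxC1b N -> mxC1b (fun t => M t *m N t).
Proof.
move=> CM CN i j; under eq_fun do rewrite mxE.
by apply: C1b_sum => k; exact: C1bM.
Qed.

Lemma mxC1b_tr a b (M : R -> 'M[R]_(a, b)) : mxC1b M -> mxC1b (fun t => (M t)^T).
Proof. by move=> CM i j; under eq_fun do rewrite mxE. Qed.

Lemma mxC1b_row a b1 b2 (M : R -> 'M[R]_(a, b1)) (N : R -> 'M[R]_(a, b2)) :
  mxC1b M -> mxC1b N -> mxC1b (fun t => row_mx (M t) (N t)).
Proof. by move=> CM CN i j; under eq_fun do rewrite mxE; case: split_ordP => k. Qed.

Lemma mxC1b_col a1 a2 b (M : R -> 'M[R]_(a1, b)) (N : R -> 'M[R]_(a2, b)) :
  mxC1b M -> mxC1b N -> mxC1b (fun t => col_mx (M t) (N t)).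
Proof. by move=> CM CN i j; under eq_fun do rewrite mxE; case: split_ordP => k. Qed.

Lemma C1b_det a (M : R -> 'M[R]_a) : mxC1b M -> C1b (fun t => \det (M t)).
Proof.
move=> CM; apply: C1b_sum => s; apply: C1bM; first exact: C1b_cst.
by apply: C1b_prod => i; exact: CM.
Qed.

Lemma mxC1b_adj a (M : R -> 'M[R]_a) : mxC1b M -> mxC1b (fun t => \adj (M t)).
Proof.
move=> CM i j; under eq_fun do rewrite mxE /cofactor.
apply: C1bM; first exact: C1b_cst.
by apply: C1b_det => k l; under eq_fun do rewrite !mxE; exact: CM.
Qed.

Lemma mxC1b_inv a (M : R -> 'M[R]_a) c : 0 < c -> (forall t, c <= \det (M t)) ->
  mxC1b M -> mxC1b (fun t => invmx (M t)).
Proof.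
move=> c_gt0 detM CM.
have unitM t : M t \in unitmx by rewrite unitmxE unitfE gt_eqF // (lt_le_trans c_gt0).
move=> i j; under eq_fun do rewrite /invmx unitM mxE.
by apply: C1bM; [exact: C1bV c_gt0 detM (C1b_det CM) | exact: mxC1b_adj].
Qed.

Lemma mx_smooth_bdd_mull d a b c (B : 'M[R]_(a, b)) (M : R -> 'M[R]_(b, c)) :
  mx_smooth_bdd d M -> mx_smooth_bdd d (fun t => B *m M t).
Proof.
move=> SM i j; under eq_fun do rewrite mxE.
by apply: smooth_bdd_sum => k; exact: smooth_bddZ.
Qed.

Lemma mx_smooth_bdd_diffA d a b (A : 'M[R]_a) (M : R -> 'M[R]_(a, b)) :
  mx_smooth_bdd d.+1 M -> mx_smooth_bdd d (diffA A M).
Proof.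
move=> SM i j; under eq_fun do rewrite /diffA /mxfun_derive !mxE -mulN1r.
apply: smooth_bddD; first exact: smooth_bdd_derive.
apply: (@smooth_bddZ R d _ (-1)); apply: smooth_bdd_sum => k; apply: smooth_bddZ.
exact: smooth_bdd_le (leqnSn d) (SM k j).
Qed.

End MatrixFunctions.

Section RealMatrices.
Variable F : realFieldType.

Lemma mulmx_trmx_eq0 a b (M : 'M[F]_(a, b)) : M *m M^T = 0 -> M = 0.
Proof.
move=> MMt0; apply/matrixP => i j.
have sum_sq : (M *m M^T) i i = \sum_k M i k ^+ 2.
  by rewrite mxE; apply: eq_bigr => k _; rewrite mxE expr2.
move: sum_sq; rewrite MMt0 mxE => /esym/psumr_eq0P.
move=> /(_ (fun k _ => sqr_ge0 _) j isT) /eqP.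
by rewrite sqrf_eq0 mxE => /eqP.
Qed.

Lemma unitmx_row_free_mul_tr a b (M : 'M[F]_(a, b)) : row_free M -> M *m M^T \in unitmx.
Proof.
move=> freeM; rewrite -row_free_unit; apply: inj_row_free => v vMMt0.
apply/eqP; rewrite -(mulmx_free_eq0 _ freeM); apply/eqP/mulmx_trmx_eq0.
by rewrite trmx_mul mulmxA -(mulmxA v) vMMt0 mul0mx.
Qed.

End RealMatrices.

Section Pseudoinverse.
Variable R : realType.

Lemma im_eq_ker_eqmx n k q (V : 'M[R]_(n, k)) (K : 'M[R]_(q, n)) :
  im_eq_ker V K -> (V^T :=: kermx K^T)%MS.
Proof.
move=> VK; apply/eqmxP/andP; split; apply/row_subP => i.
  apply/sub_kermxP; rewrite -tr_col -trmx_mul (VK _).2 ?trmx0 //.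
  by exists (delta_mx i 0); rewrite colE.
have /sub_kermxP wK := row_sub i (kermx K^T).
have [y Vy] : exists y, (row i (kermx K^T))^T = V *m y.
  by apply/VK; apply: trmx_inj; rewrite trmx_mul trmxK wK trmx0.
by apply/submxP; exists y^T; rewrite -trmx_mul -Vy trmxK.
Qed.

Lemma im_eq_ker_mul n k q (V : 'M[R]_(n, k)) (K : 'M[R]_(q, n)) :
  im_eq_ker V K -> K *m V = 0.
Proof.
move=> /im_eq_ker_eqmx VK; apply: trmx_inj; rewrite trmx_mul trmx0.
by apply/sub_kermxP; rewrite VK.
Qed.

Lemma im_eq_ker_row_free n q (K : 'M[R]_(q, n)) (V : 'M[R]_(n, n - \rank K)) :
  im_eq_ker V K -> row_free V^T.
Proof. by move=> /im_eq_ker_eqmx VK; rewrite /row_free VK mxrank_ker mxrank_tr. Qed.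

Lemma im_eq_ker_factor n k q c (V : 'M[R]_(n, k)) (K : 'M[R]_(q, n)) (W : 'M[R]_(n, c)) :
  im_eq_ker V K -> K *m W = 0 -> exists Y, W = V *m Y.
Proof.
move=> /im_eq_ker_eqmx VK KW.
have /submxP [D WD] : (W^T <= V^T)%MS.
  by rewrite VK; apply/sub_kermxP; rewrite -trmx_mul KW trmx0.
by exists D^T; rewrite -[W]trmxK WD trmx_mul trmxK.
Qed.

Lemma is_pinv_pinv a b (M : 'M[R]_(a, b)) X : is_pinv M X -> is_pinv M (Defs.pinv M).
Proof.
move=> MX; rewrite /Defs.pinv; case: pselect => [exX|]; last by move=> /(_ (ex_intro _ X MX)).
exact: proj2_sig (cid exX).
Qed.

Lemma is_pinv_tr a b (M : 'M[R]_(a, b)) X : is_pinv M X -> is_pinv M^T X^T.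
Proof.
case=> MXM XMX MXsym XMsym; split; rewrite -!trmx_mul ?trmxK.
- by rewrite mulmxA MXM.
- by rewrite mulmxA XMX.
- by rewrite XMsym.
- by rewrite MXsym.
Qed.

Lemma is_pinv_row_full a b (M : 'M[R]_(a, b)) :
  M *m M^T \in unitmx -> is_pinv M (M^T *m invmx (M *m M^T)).
Proof.
move=> unitMMt; have MX : M *m (M^T *m invmx (M *m M^T)) = 1%:M by rewrite mulmxA mulmxV.
split.
- by rewrite MX mul1mx.
- by rewrite -mulmxA MX mulmx1.
- by rewrite MX trmx1.
- by rewrite !trmx_mul trmx_inv trmx_mul trmxK mulmxA.
Qed.

Lemma pinv_row_full a b (M : 'M[R]_(a, b)) :
  M *m M^T \in unitmx -> Defs.pinv M = M^T *m invmx (M *m M^T).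
Proof.
move=> unitMMt; have [MXM XMX _ XMsym] := is_pinv_pinv (is_pinv_row_full unitMMt).
set X := Defs.pinv M in MXM XMX XMsym *.
have MX : M *m X = 1%:M.
  by rewrite -[M *m X]mulmx1 -(mulmxV unitMMt) !mulmxA MXM.
have XE : X = M^T *m (X^T *m X) by rewrite mulmxA -trmx_mul XMsym XMX.
have : M *m M^T *m (X^T *m X) = 1%:M by rewrite -mulmxA -XE.
move/(congr1 (mulmx (invmx (M *m M^T)))); rewrite mulKmx // mulmx1.
by move=> XtX; rewrite XE XtX.
Qed.

Lemma pinv_mulmx_tr_free a b (V : 'M[R]_(a, b)) : row_free V^T -> Defs.pinv V *m V = 1%:M.
Proof.
move=> freeVt; have := is_pinv_tr (is_pinv_row_full (unitmx_row_free_mul_tr freeVt)).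
rewrite trmxK => /is_pinv_pinv [VXV _ _ _].
apply: trmx_inj; apply: (row_free_inj freeVt).
by rewrite /= -trmx_mul mulmxA VXV trmx1 mul1mx.
Qed.

Lemma coordinate_change_inv s n w v (K : 'M[R]_(s, n)) (Bt : 'M[R]_(n, w)) (V : 'M[R]_(n, v)) :
  K *m Bt *m (K *m Bt)^T \in unitmx -> im_eq_ker V K -> row_free V^T ->
  let X := Defs.pinv (K *m Bt) in
  let U := col_mx K (Defs.pinv V *m (1%:M - Bt *m X *m K)) in
  let W := row_mx (Bt *m X) V in
  U *m W = 1%:M /\ W *m U = 1%:M.
Proof.
move=> unitKBt VK freeVt X U W; rewrite {}/U {}/W.
have KBtX : K *m (Bt *m X) = 1%:M by rewrite /X pinv_row_full // !mulmxA mulmxV.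
have KV := im_eq_ker_mul VK.
have VpV := pinv_mulmx_tr_free freeVt.
set P := 1%:M - Bt *m X *m K.
have KP : K *m P = 0 by rewrite mulmxBr mulmx1 !mulmxA -(mulmxA K) KBtX mul1mx subrr.
have PBtX : P *m (Bt *m X) = 0 by rewrite mulmxBl mul1mx -!mulmxA KBtX mulmx1 subrr.
have PV : P *m V = V by rewrite mulmxBl mul1mx -!mulmxA KV !mulmx0 subr0.
have VVpP : V *m Defs.pinv V *m P = P.
  by have [Y ->] := im_eq_ker_factor VK KP; rewrite -(mulmxA V) (mulmxA _ V) VpV mul1mx.
split.
  rewrite mul_col_row (scalar_mx_block s v 1) KBtX KV -!mulmxA PBtX PV VpV.
  by rewrite mulmx0.
by rewrite mul_row_col mulmxA VVpP /P addrC subrK.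
Qed.

End Pseudoinverse.

Section CoordinateChange.
Variable R : realType.
Variables (n m p r : nat) (A : 'M[R]_n) (B : 'M[R]_(n, m)) (C : 'M[R]_(p, n)).
Variable L : R -> 'M[R]_m.

Lemma P1_smooth_bdd : P1 p B L -> mx_smooth_bdd n L.
Proof.
case=> smoothL [bddL _] i j; split=> [k t|k kn]; first exact: smoothL.
have [K LK] := bddL k kn; exists K => t.
by have := LK t i j; rewrite mxE.
Qed.

Hypothesis smooth_bddL : mx_smooth_bdd n L.

Lemma mx_smooth_bdd_iter_diffA k :
  (k <= n)%N -> mx_smooth_bdd (n - k) (iter k (diffA A) (fun t => B *m L t)).
Proof.
elim: k => [|k IHk] le_kn; first by rewrite subn0; exact: mx_smooth_bdd_mull.
by rewrite iterS; apply: mx_smooth_bdd_diffA; rewrite subnSK //; apply: IHk; exact: ltnW.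
Qed.

Lemma mxC1b_calB : (r <= n)%N -> mxC1b (calB r A B L).
Proof.
move=> le_rn i j; under eq_fun do rewrite mxE.
have lt_jn : (tagnat.sig1 j < n)%N by exact: leq_trans (ltn_ord _) le_rn.
apply: smooth_bdd_C1b; apply: smooth_bdd_le (mx_smooth_bdd_iter_diffA (ltnW lt_jn) _ _).
by rewrite subn_gt0.
Qed.

Hypothesis detK : det_cond r A B C L.

Lemma det_cond_unitmx t :
  calC r A C *m calB r A B L t *m (calC r A C *m calB r A B L t)^T \in unitmx.
Proof.
have [al [al_gt0 al_le]] := detK.
by rewrite unitmxE unitfE gt_eqF // (lt_le_trans al_gt0).
Qed.

Lemma mxC1b_calB_pinv :
  mxC1b (fun t => calB r A B L t *m Defs.pinv (calC r A C *m calB r A B L t)).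
Proof.
have [p0|p_gt0] := posnP p.
  by move=> i [j lt_j]; exfalso; move: lt_j; rewrite sum_nat_const card_ord p0 muln0.
have le_rn : (r <= n)%N.
  (* calC has a right inverse, so r p <= n *)
  pose KB := calC r A C *m calB r A B L 0.
  have : calC r A C *m (calB r A B L 0 *m KB^T *m invmx (KB *m KB^T)) = 1%:M.
    by rewrite !mulmxA mulmxV // det_cond_unitmx.
  move/mulmx1_min; rewrite sum_nat_const card_ord.
  exact: leq_trans (leq_pmulr r p_gt0).
have [al [al_gt0 al_le]] := detK.
have CKB : mxC1b (fun t => calC r A C *m calB r A B L t).
  by apply: mxC1bM; [exact: mxC1b_cst | exact: mxC1b_calB].
under [X in mxC1b X]eq_fun do rewrite pinv_row_full ?det_cond_unitmx //.
apply: mxC1bM; first exact: mxC1b_calB.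
apply: mxC1bM; first exact: mxC1b_tr.
by apply: (mxC1b_inv al_gt0 al_le); apply: mxC1bM => //; exact: mxC1b_tr.
Qed.

Lemma calU_Lyapunov (V : 'M[R]_(n, n - \rank (calC r A C))) :
  im_eq_ker V (calC r A C) -> Lyapunov_transformation (calU B L V).
Proof.
move=> VK; pose G t := calB r A B L t *m Defs.pinv (calC r A C *m calB r A B L t).
have CG : mxC1b G := mxC1b_calB_pinv.
apply: (@Lyapunov_transformation_C1b _ _ _ _ (fun t => row_mx (G t) V)).
- apply: mxC1b_col; first exact: mxC1b_cst.
  apply: mxC1bM; first exact: mxC1b_cst.
  apply: mxC1bD; first exact: mxC1b_cst.
  by apply: mxC1bN; apply: mxC1bM => //; exact: mxC1b_cst.
- by apply: mxC1b_row => //; exact: mxC1b_cst.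
- by move=> t; exact: coordinate_change_inv (det_cond_unitmx t) VK (im_eq_ker_row_free VK).
Qed.

End CoordinateChange.

Section Sigmoid.
Variable R : realType.

Definition sigmoid (t : R) : R := expR t / (1 + expR t).

Lemma one_plus_expR_gt0 (t : R) : 0 < 1 + expR t.
Proof. by rewrite addr_gt0 ?expR_gt0. Qed.

Lemma sigmoid_gt0 t : 0 < sigmoid t.
Proof. by rewrite divr_gt0 ?expR_gt0 ?one_plus_expR_gt0. Qed.

Lemma sigmoid_le1 t : sigmoid t <= 1.
Proof. by rewrite ler_pdivrMr ?one_plus_expR_gt0 // mul1r lerDr. Qed.

Lemma sigmoid_le_expR t : sigmoid t <= expR t.
Proof.
by rewrite ler_pdivrMr ?one_plus_expR_gt0 // ler_peMr ?expR_ge0 // lerDl expR_ge0.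
Qed.

Lemma exists_sigmoid_sqr_lt (a : R) : 0 < a -> exists t, sigmoid t ^+ 2 < a.
Proof.
move=> a_gt0; exists (ln (a / 2)).
have := sigmoid_le_expR (ln (a / 2)); rewrite lnK ?posrE ?divr_gt0 //.
have := sigmoid_gt0 (ln (a / 2)); have := sigmoid_le1 (ln (a / 2)).
by move: (sigmoid _) => s *; nra.
Qed.

Lemma derivable_sigmoid t : derivable sigmoid t 1.
Proof.
apply: derivableM; first exact: derivable_expR.
apply: derivableV; first by rewrite gt_eqF ?one_plus_expR_gt0.
by apply: derivableD; [exact: derivable_cst | exact: derivable_expR].
Qed.

Lemma derive1_sigmoid : derive1 sigmoid = fun t => sigmoid t - sigmoid t ^+ 2.
Proof.
apply/funext => t; have e_neq0 : 1 + expR t != 0 by rewrite gt_eqF ?one_plus_expR_gt0.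
rewrite derive1E deriveM ?derivable_expR // deriveV // deriveD ?derivable_expR ?derivable_cst //.
rewrite derive_cst add0r (congr1 (fun g => g t) (@derive_expR R)) /sigmoid.
by rewrite /GRing.scale /=; field.
Qed.

Lemma derive1n_sigmoid k : exists Q : {poly R}, derive1n k sigmoid = horner Q \o sigmoid.
Proof.
elim: k => [|k [Q dQ]]; first by exists 'X; rewrite derive1n0; apply/funext => t /=; rewrite hornerX.
exists (Q^`() * ('X - 'X ^+ 2)); rewrite derive1nS dQ; apply/funext => t.
rewrite derive1_comp ?derivable_sigmoid ?derivable_horner // -derivE derive1_sigmoid.
by rewrite /= hornerM !hornerE.
Qed.

Lemma derivable_derive1n_sigmoid k t : derivable (derive1n k sigmoid) t 1.
Proof.
have [Q ->] := derive1n_sigmoid k; apply/derivable1_diffP/differentiable_comp.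
  exact/derivable1_diffP/derivable_sigmoid.
exact/derivable1_diffP/derivable_horner.
Qed.

End Sigmoid.

Lemma det_size1 (T : comNzRingType) s (M : 'M[T]_s) (i : 'I_s) : s = 1%N -> \det M = M i i.
Proof. by move=> s1; subst s; rewrite det_mx11 (ord1 i). Qed.

Lemma sum_size1 (T : nmodType) s (F : 'I_s -> T) (i : 'I_s) : s = 1%N -> \sum_j F j = F i.
Proof. by move=> s1; subst s; rewrite big_ord1 (ord1 i). Qed.

Section Counterexample.
Variable R : realType.

Let I1 : 'M[R]_1 := 1%:M.
Let L1 (t : R) : 'M[R]_1 := (sigmoid t)%:M.
Let f0 (_ : R * 'cV[R]_1 * 'cV[R]_1) : 'cV[R]_1 := 0.

Lemma sum_ord1_1 : (\sum_(k < 1) 1 = 1)%N.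
Proof. by rewrite big_ord1. Qed.

Lemma L1E i j : (fun t => L1 t i j) = @sigmoid R.
Proof. by apply/funext => t; rewrite /L1 mxE (ord1 i) (ord1 j) mulr1n. Qed.

Lemma calC1E i j : calC 1 I1 I1 i j = 1.
Proof. by rewrite mxE /I1 expr1n mulmx1 mxE (ord1 j) (ord1 (tagnat.sig2 i)). Qed.

Lemma calCB1E t i j : (calC 1 I1 I1 *m calB 1 I1 I1 L1 t) i j = sigmoid t.
Proof.
rewrite mxE big_ord1 calC1E mul1r mxE.
have -> : nat_of_ord (tagnat.sig1 j) = 0%N by case: (tagnat.sig1 j) => -[].
by rewrite /= mul1mx /L1 mxE (ord1 (tagnat.sig2 j)) mulr1n.
Qed.

Lemma det_calCB1 t :
  \det (calC 1 I1 I1 *m calB 1 I1 I1 L1 t *m (calC 1 I1 I1 *m calB 1 I1 I1 L1 t)^T) =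
  sigmoid t ^+ 2.
Proof.
have lt0 : (0 < \sum_(k < 1) 1)%N by rewrite sum_ord1_1.
rewrite (det_size1 _ (Ordinal lt0) sum_ord1_1) mxE (sum_size1 _ (Ordinal lt0) sum_ord1_1).
by rewrite calCB1E mxE calCB1E expr2.
Qed.

Lemma rank_calC1 : \rank (calC 1 I1 I1) = 1%N.
Proof.
have lt0 : (0 < \sum_(k < 1) 1)%N by rewrite sum_ord1_1.
apply/eqP; rewrite eqn_leq rank_leq_col lt0n mxrank_eq0.
by apply/eqP => /matrixP/(_ (Ordinal lt0) 0); rewrite calC1E mxE; exact/eqP/oner_neq0.
Qed.

Lemma rank_L1 t : \rank (L1 t) = 1%N.
Proof.
by apply: mxrank_unit; rewrite unitmxE det_scalar1 unitfE gt_eqF ?sigmoid_gt0.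
Qed.

Lemma example_P1 : P1 1 I1 L1.
Proof.
split; first by move=> i j k t; rewrite L1E; exact: derivable_derive1n_sigmoid.
split; last by exists 1%N; split=> // t; rewrite mul1mx rank_L1.
move=> k le_k1; exists 1 => t i j; rewrite mxE L1E.
have := sigmoid_gt0 t; have := sigmoid_le1 t.
case: k le_k1 => [|[|//]] _; rewrite ?derive1n0 ?derive1n1 ?derive1_sigmoid => s_le1 s_gt0;
  by rewrite ger0_norm; nra.
Qed.

Lemma example_P2 : P2 1 I1 I1 I1 f0 L1.
Proof. by split=> //; split=> // t; rewrite expr0 /I1 mulmx1 !mul1mx rank_L1. Qed.

Lemma example_Lyapunov (V : 'M[R]_(1, 1 - \rank (calC 1 I1 I1))) :
  im_eq_ker V (calC 1 I1 I1) -> Lyapunov_transformation (calU I1 L1 V).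
Proof.
move=> VK; have no_row (i : 'I_(1 - \rank (calC 1 I1 I1))) : False.
  by move: i; rewrite rank_calC1 => -[].
have U_cst : calU I1 L1 V = fun=> calU I1 L1 V 0.
  apply/funext => t; apply/matrixP => i j; rewrite !mxE.
  by case: split_ordP => k; last case: (no_row k).
have unit0 : calC 1 I1 I1 *m calB 1 I1 I1 L1 0 *m (calC 1 I1 I1 *m calB 1 I1 I1 L1 0)^T \in unitmx.
  by rewrite unitmxE det_calCB1 unitfE expf_neq0 // gt_eqF ?sigmoid_gt0.
apply: (@Lyapunov_transformation_C1b _ _ _ _
  (fun=> row_mx (calB 1 I1 I1 L1 0 *m Defs.pinv (calC 1 I1 I1 *m calB 1 I1 I1 L1 0)) V)).
- by rewrite U_cst; exact: mxC1b_cst.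
- exact: mxC1b_cst.
- by move=> t; rewrite U_cst; exact: coordinate_change_inv unit0 VK (im_eq_ker_row_free VK).
Qed.

Lemma example_not_det_cond : ~ det_cond 1 I1 I1 I1 L1.
Proof.
move=> [a [a_gt0 le_a_det]]; have [t] := exists_sigmoid_sqr_lt a_gt0.
by rewrite -det_calCB1 ltNge le_a_det.
Qed.

Lemma det_cond_not_necessary :
  exists (n m p r : nat) (A : 'M[R]_n) (B : 'M[R]_(n, m)) (C : 'M[R]_(p, n))
     (f : R * 'cV[R]_n * 'cV[R]_m -> 'cV[R]_n) (L : R -> 'M[R]_m),
     (p <= m)%N /\ f_cont_bdd f /\ P1 p B L /\ P2 r A B C f L /\
     (forall V : 'M[R]_(n, n - \rank (calC r A C)),
        im_eq_ker V (calC r A C) -> Lyapunov_transformation (calU B L V)) /\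
     ~ det_cond r A B C L.
Proof.
exists 1%N, 1%N, 1%N, 1%N, I1, I1, I1, f0, L1.
split=> //; split; first by split; [exact: cst_continuous | exists 0 => x i j; rewrite mxE normr0].
split; first exact: example_P1.
split; first exact: example_P2.
by split; [exact: example_Lyapunov | exact: example_not_det_cond].
Qed.

End Counterexample.

Unset Implicit Arguments.

Theorem lemma2 (R : realType) :
  (forall (n m p r : nat) (A : 'M[R]_n) (B : 'M[R]_(n, m)) (C : 'M[R]_(p, n))
     (f : R * 'cV[R]_n * 'cV[R]_m -> 'cV[R]_n) (L : R -> 'M[R]_m)
     (V : 'M[R]_(n, n - \rank (calC r A C))),
     (p <= m)%N -> f_cont_bdd f -> P1 p B L -> P2 r A B C f L ->
     im_eq_ker V (calC r A C) ->
     det_cond r A B C L ->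
     Lyapunov_transformation (calU B L V))
  /\
  (exists (n m p r : nat) (A : 'M[R]_n) (B : 'M[R]_(n, m)) (C : 'M[R]_(p, n))
     (f : R * 'cV[R]_n * 'cV[R]_m -> 'cV[R]_n) (L : R -> 'M[R]_m),
     (p <= m)%N /\ f_cont_bdd f /\ P1 p B L /\ P2 r A B C f L /\
         (forall V : 'M[R]_(n, n - \rank (calC r A C)),
            im_eq_ker V (calC r A C) -> Lyapunov_transformation (calU B L V)) /\
       ~ det_cond r A B C L).
Proof.
split; last exact: det_cond_not_necessary.
move=> n m p r A B C f L V _ _ /P1_smooth_bdd smooth_bddL _ VK detK.
exact: calU_Lyapunov smooth_bddL detK V VK.
Qed.
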